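(* Let $R$ be the ring of integers of a nonarchimedean local field of characteristic not $2$ in which $2$ is a prime element. (a) For any unit $\epsilon\in R$, $\mathbb{H}\perp\langle\epsilon\rangle$ is isometric to $\langle 1,-1,\epsilon\rangle$. Hence $\mathbb{H}\perp\langle\epsilon\rangle$ primitively represents all binary $R$-lattices of the form $\langle\alpha,\epsilon\rangle$ with $\alpha\in R$; in particular, $\mathbb{H}\perp\langle\epsilon\rangle$ is primitively $1$-universal. (b) If an $R$-lattice $J$ primitively represents an $R$-lattice $K$ of rank $k$ and also primitively represents some unit of $R$, then for every $n\ge1$, $\mathbb{H}^n\perp J$ primitively represents all $R$-lattices of rank $n+k$ of the form $\ell\perp K$, where $\ell$ is any $R$-lattice of rank $n$. In particular, $\mathbb{H}^n\perp J$ is primitively $n$-universal.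
   Context: An $R$-lattice is a finitely generated $R$-submodule of a quadratic space $(V,B)$ over $F$ with $Q(v)=B(v,v)$, assumed integral ($B(L,L)\subseteq R$). $L$ primitively represents $\beta\in R$ if $\beta=Q(v)$ for some $v\in L$ with $Rv$ a direct summand. A representation is an $R$-linear map preserving $B$, primitive if its image is a direct summand; a lattice is primitively $n$-universal if it primitively represents every nondegenerate integral $R$-lattice of rank $n$. $\mathbb{H}$ is the binary lattice with Gram matrix $\begin{pmatrix}0&1\\1&0\end{pmatrix}$, $\mathbb{H}^n$ the orthogonal sum of $n$ copies, and $\langle a_1,\dots,a_k\rangle$ the lattice with Gram matrix $\operatorname{diag}(a_1,\dots,a_k)$. *)

From HB Require Import structures.
From mathcomp Require Import all_boot all_order all_algebra.
Set Implicit Arguments. Unset Strict Implicit. Unset Printing Implicit Defensive.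
Import Order.TTheory GRing.Theory Num.Theory.
Local Open Scope ring_scope.

(* v is only meaningful on nonzero elements.                           *)

Definition is_dvaluation (F : fieldType) (v : F -> int) : Prop :=
  [/\ (forall x y : F, x != 0 -> y != 0 -> v (x * y) = v x + v y),
      (forall x y : F, x != 0 -> y != 0 -> x + y != 0 ->
          Num.min (v x) (v y) <= v (x + y))
    & (exists pi : F, pi != 0 /\ v pi = 1)].

Definition vint (F : fieldType) (v : F -> int) (x : F) : bool :=
  (x == 0) || (0 <= v x).

Definition vclose (F : fieldType) (v : F -> int) (N : int) (x y : F) : Prop :=
  x - y = 0 \/ N <= v (x - y).

Definition vcomplete (F : fieldType) (v : F -> int) : Prop :=
  forall u : nat -> F,
    (forall N : int, exists M : nat, forall i j : nat,
        (M <= i)%N -> (M <= j)%N -> vclose v N (u i) (u j)) ->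
    exists l : F, forall N : int, exists M : nat, forall i : nat,
        (M <= i)%N -> vclose v N (u i) l.

Definition finite_residue_field (F : fieldType) (v : F -> int) : Prop :=
  exists s : seq F, all (vint v) s /\
    forall x : F, vint v x -> exists2 y, y \in s & vclose v 1 x y.

Definition ring_of_integers_of_local_field (R : idomainType) : Prop :=
  exists (F : fieldType) (v : F -> int) (iota : {rmorphism R -> F}),
    [/\ injective iota, is_dvaluation v, vcomplete v, finite_residue_field v
      & forall x : F, vint v x <-> exists r : R, iota r = x].

Definition divides (R : comNzRingType) (a b : R) : Prop := exists c : R, b = a * c.

Definition prime_element (R : idomainType) (p : R) : Prop :=
  [/\ p != 0, p \isn't a GRing.unit
    & forall a b : R, divides p (a * b) -> divides p a \/ divides p b].

(* Quadratic R-lattices, given by a basis: an R-lattice of rank n is    *)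
(* R^n (row vectors) with the bilinear form B(x,y) = x G y^T for a      *)
(* symmetric Gram matrix G with entries in R (integrality).            *)

Section Lattices.
Variable R : comUnitRingType.

Definition gram_sym (n : nat) (G : 'M[R]_n) : Prop := G^T = G.

Definition nondegenerate (n : nat) (G : 'M[R]_n) : Prop := \det G != 0.

Definition bform (n : nat) (G : 'M[R]_n) (x y : 'rV[R]_n) : R :=
  (x *m G *m y^T) 0 0.

Definition qform (n : nat) (G : 'M[R]_n) (x : 'rV[R]_n) : R := bform G x x.

Definition orth (n m : nat) (G1 : 'M[R]_n) (G2 : 'M[R]_m) : 'M[R]_(n + m) :=
  block_mx G1 0 0 G2.

Definition diag_lat (s : seq R) : 'M[R]_(size s) :=
  diag_mx (\row_(i < size s) s`_i).

(* H^n : Gram matrix of n orthogonal copies of the hyperbolic plane,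
   on the basis e_1,f_1,...,e_n,f_n with B(e_i,f_i)=1 *)
Definition hyp_n (n : nat) : 'M[R]_(n.*2) :=
  \matrix_(i, j) (if ((i : nat)./2 == (j : nat)./2) && (i != j :> nat)
                  then 1 else 0).

Definition hyp : 'M[R]_(1.*2) := hyp_n 1.

Definition submodule (m : nat) (N : 'rV[R]_m -> Prop) : Prop :=
  [/\ N 0, (forall x y, N x -> N y -> N (x + y))
    & (forall (a : R) x, N x -> N (a *: x))].

Definition direct_summand (m : nat) (M : 'rV[R]_m -> Prop) : Prop :=
  exists N : 'rV[R]_m -> Prop,
    [/\ submodule N,
        (forall w, exists x y, [/\ M x, N y & w = x + y])
      & (forall w, M w -> N w -> w = 0)].

Definition representation (k m : nat) (K : 'M[R]_k) (L : 'M[R]_m)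
    (X : 'M[R]_(k, m)) : Prop :=
  forall x y : 'rV[R]_k, bform L (x *m X) (y *m X) = bform K x y.

Definition image_mx (k m : nat) (X : 'M[R]_(k, m)) : 'rV[R]_m -> Prop :=
  fun w => exists u : 'rV[R]_k, w = u *m X.

Definition prim_rep (m k : nat) (L : 'M[R]_m) (K : 'M[R]_k) : Prop :=
  exists X : 'M[R]_(k, m), representation K L X /\ direct_summand (image_mx X).

Definition prim_rep_elt (m : nat) (L : 'M[R]_m) (beta : R) : Prop :=
  exists v : 'rV[R]_m, qform L v = beta /\
    direct_summand (fun w => exists a : R, w = a *: v).

Definition prim_universal (n m : nat) (L : 'M[R]_m) : Prop :=
  forall K : 'M[R]_n, gram_sym K -> nondegenerate K -> prim_rep L K.

Definition isometric (n : nat) (G1 G2 : 'M[R]_n) : Prop :=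
  exists P : 'M[R]_n, P \in unitmx /\ P *m G1 *m P^T = G2.

End Lattices.

(* Since 2 is a prime element, R/2R is the residue field, finite of characteristic 2,
   so squaring is a bijection on it: every r in R is z^2 + 2a.  Hence for a unit u every
   symmetric matrix l splits as T + T^T + u c^T c.  If Q(w) = u in J and K is primitively
   represented by Y, then in H^n ⊥ J (basis e_i, f_i) the vectors
   e_i + \sum_j T_ij f_j + c_i w have Gram matrix l, and the rows of Y, shifted by a
   multiple of the f_j, become orthogonal to them; the identity block on the e_i makes
   the image a direct summand.  Part (a) is the case J = K = <eps> together with an
   explicit isometry H ⊥ <eps> = <1, -1, eps>. *)

From HB Require Import structures.
From mathcomp Require Import all_boot all_order all_algebra.
From mathcomp Require Import boolp.
From mathcomp Require Import ring zify.
Import Order.TTheory GRing.Theory Num.Theory.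
Local Open Scope ring_scope.
Set Implicit Arguments. Unset Strict Implicit.

Section Divisibility.
Variable R : comNzRingType.
Implicit Types p a b : R.

Lemma dividesD p a b : divides p a -> divides p b -> divides p (a + b).
Proof. by move=> [c ->] [d ->]; exists (c + d); rewrite mulrDr. Qed.

Lemma dividesN p a : divides p a -> divides p (- a).
Proof. by move=> [c ->]; exists (- c); rewrite mulrN. Qed.

Lemma dividesB p a b : divides p a -> divides p b -> divides p (a - b).
Proof. by move=> pa /dividesN; apply: dividesD. Qed.

Lemma divides_mulr p a : divides p (p * a).
Proof. by exists a. Qed.

End Divisibility.

Lemma prime_dividesX (R : idomainType) (p a : R) (K : nat) :
  prime_element p -> divides p (a ^+ K.+1) -> divides p a.
Proof.
case=> _ _ p_prime; elim: K => [|K IH]; first by rewrite expr1.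
by rewrite exprS => /p_prime [] // /IH.
Qed.

Section FiniteQuotient.
Variables (T : eqType) (e : rel T) (s : seq T) (g : T -> T).
Hypotheses (e_refl : reflexive e) (e_ltrans : left_transitive e).
Hypotheses (s_covers : forall x, has (e x) s) (g_inj : forall x y, e (g x) (g y) = e x y).

Let e_sym x y : e x y -> e y x.
Proof. by move=> /e_ltrans exy; rewrite -exy e_refl. Qed.

Let rep x := nth x s (find (e x) s).

Let e_rep x : e x (rep x). Proof. exact: nth_find. Qed.

Let rep_eq x y : e x y -> rep x = rep y.
Proof.
move=> exy; rewrite /rep (eq_find (e_ltrans exy)) (set_nth_default y) //.
by rewrite -has_find.
Qed.

Let rep_in x : rep x \in s.
Proof. by rewrite mem_nth // -has_find. Qed.

Let reps := undup (map rep s).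

Let rep_in_reps x : rep x \in reps.
Proof.
by rewrite mem_undup (rep_eq (e_rep x)) map_f.
Qed.

Let rep_id y : y \in reps -> rep y = y.
Proof. by rewrite mem_undup => /mapP [x _ ->]; apply/esym/rep_eq. Qed.

Lemma quotient_onto_of_inj y : exists x, e (g x) y.
Proof.
pose phi x := rep (g x).
have phi_inj : {in reps &, injective phi}.
  move=> y1 y2 y1r y2r phi12; rewrite -(rep_id y1r) -(rep_id y2r); apply: rep_eq.
  rewrite -g_inj (e_ltrans (e_rep _)) /phi in phi12 *.
  by rewrite phi12 e_sym.
have [_ phi_onto] : (size (map phi reps) = size reps) * (map phi reps =i reps).
  apply: uniq_min_size; rewrite ?size_map //.
    by rewrite (map_inj_in_uniq phi_inj) undup_uniq.
  by move=> _ /mapP [x _ ->]; apply: rep_in_reps.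
have := rep_in_reps y; rewrite -phi_onto => /mapP [x _ phixy].
by exists x; rewrite (e_ltrans (e_rep _)) -/(phi x) -phixy e_sym.
Qed.

End FiniteQuotient.

Definition squares_onto_mod2 (R : comNzRingType) : Prop :=
  forall r : R, exists z, divides 2%:R (r - z ^+ 2).

Lemma squares_onto_mod2_of_finite_residues (R : idomainType) (s : seq R) :
    prime_element (2%:R : R) ->
    (forall r, exists2 y, y \in s & divides 2%:R (r - y)) ->
  squares_onto_mod2 R.
Proof.
move=> two_prime s_covers r.
pose e (x y : R) := `[< divides 2%:R (x - y) >].
have e_refl : reflexive e.
  by move=> x; apply/asboolP; rewrite subrr; exists 0; rewrite mulr0.
have e_ltrans : left_transitive e.
  move=> x y /asboolP exy z; apply/asboolP/asboolP => exz.
  - have -> : y - z = (x - z) - (x - y) by ring.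
    exact: dividesB.
  - have -> : x - z = (x - y) + (y - z) by ring.
    exact: dividesD.
have e_cover x : has (e x) s.
  by have [y ys xy] := s_covers x; apply/hasP; exists y => //; apply/asboolP.
have e_sqr x y : e (x ^+ 2) (y ^+ 2) = e x y.
  apply/asboolP/asboolP => [exy2|[c exy]]; last first.
    exists (c * (x + y)).
    have -> : x ^+ 2 - y ^+ 2 = (x - y) * (x + y) by ring.
    by rewrite exy mulrA.
  have [_ _ two_primeM] := two_prime.
  suff : divides 2%:R ((x - y) * (x - y)) by case/two_primeM.
  have -> : (x - y) * (x - y) = (x ^+ 2 - y ^+ 2) - 2%:R * (y * (x - y)) by ring.
  exact/dividesB/divides_mulr.
have [z /asboolP ezr] := quotient_onto_of_inj e_refl e_ltrans e_cover e_sqr r.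
by exists z; rewrite -opprB; apply: dividesN.
Qed.

Section ValuationRing.
Variables (R : idomainType) (F : fieldType) (v : F -> int).
Variable iota : {rmorphism R -> F}.
Hypotheses (iota_inj : injective iota) (v_val : is_dvaluation v).
Hypothesis iota_vint : forall x : F, vint v x <-> exists r : R, iota r = x.

Let vM x y : x != 0 -> y != 0 -> v (x * y) = v x + v y.
Proof. by case: v_val => + _ _; apply. Qed.

Lemma dval1 : v 1 = 0.
Proof.
by apply: (addrI (v 1)); rewrite addr0 -vM ?oner_neq0 ?mulr1.
Qed.

Lemma dvalV x : x != 0 -> v x^-1 = - v x.
Proof.
by move=> x0; apply: (addrI (v x)); rewrite subrr -vM ?invr_eq0 ?mulfV ?dval1.
Qed.

Lemma dvalX x j : x != 0 -> v (x ^+ j) = v x *+ j.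
Proof.
move=> x0; elim: j => [|j IH]; first by rewrite expr0 dval1.
by rewrite exprS vM ?expf_neq0 // IH mulrS.
Qed.

Let iota_eq0 r : (iota r == 0) = (r == 0).
Proof. exact: raddf_eq0. Qed.

Lemma dval_iota_ge0 r : r != 0 -> 0 <= v (iota r).
Proof.
move=> r0; have : vint v (iota r) by apply/iota_vint; exists r.
by rewrite /vint iota_eq0 (negPf r0).
Qed.

Lemma dval_ge0_iota x : x != 0 -> 0 <= v x -> exists r, iota r = x.
Proof. by move=> _ vx; apply/iota_vint; rewrite /vint vx orbT. Qed.

Variable p : R.
Hypothesis p_prime : prime_element p.

Let iota_p_neq0 : iota p != 0.
Proof. by rewrite iota_eq0; case: p_prime. Qed.

Lemma dval_prime_gt0 : 0 < v (iota p).
Proof.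
have [_ p_unit _] := p_prime; rewrite ltNge; apply: contra p_unit => vp_le0.
have [r ipr] : exists r, iota r = (iota p)^-1.
  by apply: dval_ge0_iota; rewrite ?invr_eq0 ?iota_p_neq0 // dvalV ?oppr_ge0.
by apply/unitrPr; exists r; apply: iota_inj; rewrite rmorphM ipr mulfV ?rmorph1.
Qed.

(* With v (iota p) = K + 1, pi^(K+1) / iota p lies in R, so p divides q^(K+1)
   where iota q = pi; hence p divides q and v (iota p) <= v pi = 1. *)
Lemma dval_prime : v (iota p) = 1.
Proof.
have [_ _ [pi [pi0 vpi]]] := v_val.
apply/eqP; rewrite eq_le -gtz0_ge1 dval_prime_gt0 andbT.
have [K vpK] : exists K : nat, v (iota p) = K.+1%:Z.
  exists `|v (iota p)|.-1; have vp_gt0 := dval_prime_gt0.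
  by rewrite prednK ?absz_gt0 ?gt_eqF // gez0_abs ?ltW.
have [q iq] : exists q, iota q = pi by apply: dval_ge0_iota; rewrite ?vpi.
have [r ir] : exists r, iota r = pi ^+ K.+1 / iota p.
  apply: dval_ge0_iota; first by rewrite mulf_neq0 ?invr_eq0 ?expf_neq0 ?iota_p_neq0.
  rewrite vM ?invr_eq0 ?expf_neq0 ?iota_p_neq0 // dvalV ?iota_p_neq0 //.
  by rewrite dvalX // vpi vpK natz subrr.
have /prime_dividesX [//|q' qq'] : divides p (q ^+ K.+1).
  by exists r; apply: iota_inj; rewrite rmorphM rmorphXn iq ir mulrC divfK.
have q'0 : q' != 0 by apply: contraNneq pi0 => q'0; rewrite -iq qq' q'0 mulr0 rmorph0.
by rewrite -vpi -iq qq' rmorphM vM ?iota_p_neq0 ?iota_eq0 // lerDl dval_iota_ge0.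
Qed.

Lemma prime_divides_of_dval_gt0 d : d != 0 -> 0 < v (iota d) -> divides p d.
Proof.
move=> d0 vd; have id0 : iota d != 0 by rewrite iota_eq0.
have [r ir] : exists r, iota r = iota d / iota p.
  apply: dval_ge0_iota; first by rewrite mulf_neq0 ?invr_eq0 ?iota_p_neq0.
  rewrite vM ?invr_eq0 ?iota_p_neq0 // dvalV ?iota_p_neq0 //.
  by rewrite dval_prime subr_ge0 -gtz0_ge1.
by exists r; apply: iota_inj; rewrite rmorphM ir mulrC divfK.
Qed.

End ValuationRing.

Lemma finite_residues_mod_prime (R : idomainType) (p : R) :
    ring_of_integers_of_local_field R -> prime_element p ->
  exists s : seq R, forall r, exists2 y, y \in s & divides p (r - y).
Proof.
move=> [F [v [iota [iota_inj v_val _ [s [s_int s_res] iota_vint]]]]] p_prime.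
have [s' s_iota] : exists s' : seq R, s = map iota s'.
  elim: s s_int {s_res} => [|y s IH] /=; first by exists [::].
  by case/andP => /iota_vint [y' <-] /IH [s' ->]; exists (y' :: s').
exists s' => r; have /s_res : vint v (iota r) by apply/iota_vint; exists r.
rewrite s_iota => -[_ /mapP [y ys ->] ry]; exists y => //.
have [->|ry0] := eqVneq (r - y) 0; first by exists 0; rewrite mulr0.
apply: (prime_divides_of_dval_gt0 iota_inj v_val iota_vint p_prime ry0).
rewrite rmorphB gtz0_ge1; case: ry => // /eqP.
by rewrite -rmorphB raddf_eq0 // (negPf ry0).
Qed.

Lemma local_squares_onto_mod2 (R : idomainType) :
    ring_of_integers_of_local_field R -> prime_element (2%:R : R) ->
  squares_onto_mod2 R.
Proof.
move=> hR two_prime; have [s s_res] := finite_residues_mod_prime hR two_prime.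
exact: squares_onto_mod2_of_finite_residues two_prime s_res.
Qed.

Section LatticeMaps.
Variable R : comUnitRingType.

Lemma bform_delta n (G : 'M[R]_n) i j : bform G (delta_mx 0 i) (delta_mx 0 j) = G i j.
Proof. by rewrite /bform trmx_delta -rowE -colE !mxE. Qed.

Lemma representationP k m (K : 'M[R]_k) (L : 'M_m) (X : 'M_(k, m)) :
  representation K L X <-> X *m L *m X^T = K.
Proof.
split=> [XLK|<- x y]; last by rewrite /bform trmx_mul !mulmxA.
apply/matrixP => i j; rewrite -[LHS]bform_delta -[RHS]bform_delta -XLK.
by rewrite /bform trmx_mul !mulmxA.
Qed.

Lemma qform_mx m (L : 'M[R]_m) v : v *m L *m v^T = (qform L v)%:M.
Proof. exact: mx11_scalar. Qed.

Lemma direct_summand_image_mulmx k m1 m2 (X : 'M[R]_(k, m1))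
    (Q : 'M_(m1, m2)) (Q' : 'M_(m2, m1)) :
    Q *m Q' = 1%:M -> Q' *m Q = 1%:M ->
  direct_summand (image_mx X) -> direct_summand (image_mx (X *m Q)).
Proof.
move=> QQ' Q'Q [N [[N0 ND NZ] N_span N_cap]].
exists (fun w => exists y, N y /\ w = y *m Q); split.
- split; first by exists 0; rewrite mul0mx.
  + move=> _ _ [a [Na ->]] [b [Nb ->]].
    by exists (a + b); rewrite mulmxDl; split => //; apply: ND.
  + move=> a _ [b [Nb ->]].
    by exists (a *: b); rewrite scalemxAl; split => //; apply: NZ.
- move=> w; have [_ [y [[u ->] Ny wQ']]] := N_span (w *m Q').
  exists (u *m (X *m Q)), (y *m Q); split; [by exists u | by exists y |].
  by rewrite mulmxA -mulmxDl -wQ' -mulmxA Q'Q mulmx1.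
- move=> _ [u ->] [y [Ny uXQ]].
  have uXy : u *m X = y.
    by have := congr1 (mulmx^~ Q') uXQ; rewrite /= -!mulmxA QQ' !mulmx1.
  suff uX0 : u *m X = 0 by rewrite mulmxA uX0 mul0mx.
  by apply: N_cap; [exists u | rewrite uXy].
Qed.

Lemma prim_rep_congr k m1 m2 (K : 'M[R]_k) (L1 : 'M_m1) (L2 : 'M_m2)
    (Q : 'M_(m2, m1)) (Q' : 'M_(m1, m2)) :
    Q *m L1 *m Q^T = L2 -> Q *m Q' = 1%:M -> Q' *m Q = 1%:M ->
  prim_rep L2 K -> prim_rep L1 K.
Proof.
move=> QL1 QQ' Q'Q [X [/representationP XL2 X_ds]]; exists (X *m Q); split.
  by apply/representationP; rewrite -XL2 -QL1 trmx_mul !mulmxA.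
exact: direct_summand_image_mulmx QQ' Q'Q X_ds.
Qed.

Lemma prim_rep_refl m (L : 'M[R]_m) : prim_rep L L.
Proof.
exists 1%:M; split; first by apply/representationP; rewrite mul1mx trmx1 mulmx1.
exists (fun w => w = 0); split.
- by split=> // [_ _ -> ->|a _ ->]; rewrite ?addr0 ?scaler0.
- by move=> w; exists w, 0; split=> //; [exists w; rewrite mulmx1 | rewrite addr0].
- by [].
Qed.

Lemma prim_rep0 m (L : 'M[R]_m) : prim_rep L (0 : 'M_0).
Proof.
exists 0; split; first by apply/representationP; rewrite thinmx0.
exists (fun => True); split => //.
- by move=> w; exists 0, w; split=> //; [exists 0; rewrite mul0mx | rewrite add0r].
- by move=> _ [u ->] _; rewrite mulmx0.
Qed.

Lemma prim_rep_orth0 k m (L : 'M[R]_m) (K : 'M_k) :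
  prim_rep L (orth K (0 : 'M_0)) -> prim_rep L K.
Proof.
move=> [X [/representationP XLK X_ds]]; exists (usubmx X); split.
  apply/representationP; move: XLK; rewrite -[X]vsubmxK tr_col_mx mul_col_mx.
  by rewrite mul_col_row /orth col_mxKu => /(congr1 ulsubmx); rewrite !block_mxKul.
have XE : X = col_mx (usubmx X) 0 by rewrite -[X]vsubmxK flatmx0 col_mxKu.
case: X_ds => N [N_sub N_span N_cap]; exists N; split => //.
- move=> w; have [x [y [[u ->] Ny ->]]] := N_span w.
  by exists (lsubmx u *m usubmx X), y; split=> //; [exists (lsubmx u) |
    rewrite {1}XE -{1}[u]hsubmxK mul_row_col mulmx0 addr0].
- move=> w [u ->]; apply: N_cap; exists (row_mx u 0).
  by rewrite {2}XE mul_row_col mulmx0 addr0.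
Qed.

Section Reindex.
Variables (m n : nat) (f : 'I_m -> 'I_n).

Lemma rowsub1_conj (A : 'M[R]_n) :
  rowsub f 1%:M *m A *m (rowsub f 1%:M)^T = mxsub f f A.
Proof.
have -> : (rowsub f 1%:M)^T = colsub f (1%:M : 'M[R]_n).
  by apply/matrixP => i j; rewrite !mxE eq_sym.
by rewrite -rowsubE mulmx_colsub mulmx1; apply/matrixP => i j; rewrite !mxE.
Qed.

Lemma rowsub1_mul_tr :
  injective f -> rowsub f 1%:M *m (rowsub f 1%:M)^T = 1%:M :> 'M[R]_m.
Proof.
move=> f_inj; have := rowsub1_conj 1%:M; rewrite mulmx1 => ->.
by apply/matrixP => i j; rewrite !mxE (inj_eq f_inj).
Qed.

Lemma tr_rowsub1 (g : 'I_n -> 'I_m) : cancel f g -> cancel g f ->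
  (rowsub f 1%:M)^T = rowsub g 1%:M :> 'M[R]_(n, m).
Proof.
move=> fK gK; apply/matrixP => i j; rewrite !mxE.
suff -> : (f j == i) = (g i == j) by [].
by apply/idP/idP => /eqP <-; rewrite ?fK ?gK.
Qed.

End Reindex.

Lemma diag_lat_sym (s : seq R) : gram_sym (diag_lat s).
Proof. exact: tr_diag_mx. Qed.

Lemma diag_lat_cons (a : R) s : diag_lat (a :: s) = orth (diag_lat [:: a]) (diag_lat s).
Proof.
rewrite /orth /diag_lat -diag_mx_row; congr diag_mx; apply/rowP => j.
case: (@split_ordP 1 (size s) j) => b ->.
all: by rewrite !mxE ?(unsplitK (inl _)) ?(unsplitK (inr _)) !mxE ?ord1.
Qed.

Lemma qform_diag_lat1 (a : R) : qform (diag_lat [:: a]) 1%:M = a.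
Proof. by rewrite /qform /bform mul1mx trmx1 mulmx1 !mxE. Qed.

End LatticeMaps.

Section Hyperbolic.
Variable R : comUnitRingType.

Definition hyp_block n : 'M[R]_(n + n) := block_mx 0 1%:M 1%:M 0.

(* [hyp_index] sends the basis e_1..e_n, f_1..f_n of [hyp_block n] to the
   positions of e_i, f_i in the interleaved basis of [hyp_n]. *)
Definition hyp_pos n (i : nat) : nat := if (i < n)%N then i.*2 else (i - n).*2.+1.

Lemma hyp_pos_lt n (i : 'I_(n + n)) : (hyp_pos n i < n.*2)%N.
Proof. by rewrite /hyp_pos; have := ltn_ord i; case: ifP; lia. Qed.

Definition hyp_index n (i : 'I_(n + n)) : 'I_(n.*2) := Ordinal (hyp_pos_lt i).

Lemma hyp_index_inj n : injective (@hyp_index n).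
Proof.
move=> i j /(congr1 val); rewrite /= /hyp_pos => eq_ij; apply: val_inj => /=.
by move: eq_ij (ltn_ord i) (ltn_ord j); do 2 case: ifP; lia.
Qed.

Lemma hyp_index_lshift n (a : 'I_n) : hyp_index (lshift n a) = a.*2 :> nat.
Proof. by rewrite /= /hyp_pos ltn_ord. Qed.

Lemma hyp_index_rshift n (a : 'I_n) : hyp_index (rshift n a) = (a.*2).+1 :> nat.
Proof. by rewrite /= /hyp_pos ltnNge leq_addr addKn. Qed.

Lemma hyp_n_reindex n :
  mxsub (@hyp_index n) (@hyp_index n) (hyp_n R n) = hyp_block n.
Proof.
apply/matrixP => i j; rewrite /hyp_block.
case: (split_ordP i) => a ->; case: (split_ordP j) => b ->.
all: rewrite ?block_mxEul ?block_mxEur ?block_mxEdl ?block_mxEdr !mxE.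
all: rewrite ?hyp_index_lshift ?hyp_index_rshift -?uphalfE ?uphalf_double ?doubleK.
all: have [<-|ab] := eqVneq a b; last by rewrite ?(negPf ab) (negPf (ab : a != b :> nat)).
all: by rewrite !eqxx ?(ltn_eqF (ltnSn _)) ?(gtn_eqF (ltnSn _)).
Qed.

Lemma prim_rep_hyp_n_of_block n m k (J : 'M[R]_m) (K : 'M_k) :
  prim_rep (orth (hyp_block n) J) K -> prim_rep (orth (hyp_n R n) J) K.
Proof.
have [g fK gK] : bijective (@hyp_index n).
  by apply: inj_card_bij; [apply: hyp_index_inj | rewrite !card_ord addnn].
pose P := rowsub (@hyp_index n) (1%:M : 'M[R]_(n.*2)).
have PPt : P *m P^T = 1%:M by apply/rowsub1_mul_tr/hyp_index_inj.
have PtP : P^T *m P = 1%:M.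
  rewrite /P (tr_rowsub1 _ fK gK) -(tr_rowsub1 _ gK fK).
  exact/rowsub1_mul_tr/(can_inj gK).
apply: (prim_rep_congr (Q := block_mx P 0 0 1%:M) (Q' := block_mx P^T 0 0 1%:M)).
- rewrite /orth tr_block_mx !trmx0 trmx1 !mulmx_block.
  rewrite !mulmx0 !mul0mx !mulmx1 !mul1mx !addr0 !add0r mul0mx.
  by rewrite rowsub1_conj hyp_n_reindex.
- rewrite (mulmx_block (R := R)) !mulmx0 !mul0mx !mulmx1 !addr0 !add0r.
  by rewrite PPt -scalar_mx_block.
- rewrite (mulmx_block (R := R)) !mulmx0 !mul0mx !mulmx1 !addr0 !add0r.
  by rewrite PtP -scalar_mx_block.
Qed.

Lemma direct_summand_image_block n m k (A : 'M[R]_n) (B : 'M_(n, m))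
    (Y : 'M_(k, m)) (E : 'M_(m, n)) :
    direct_summand (image_mx Y) ->
  direct_summand (image_mx (block_mx (row_mx 1%:M A) B (row_mx 0 (Y *m E)) Y)).
Proof.
set X := block_mx _ _ _ _.
have XE p q : row_mx p q *m X =
    row_mx (row_mx p (p *m A + q *m (Y *m E))) (p *m B + q *m Y).
  by rewrite /X mul_row_block !mul_mx_row add_row_mx mulmx1 mulmx0 addr0.
move=> [N [[N0 ND NZ] N_span N_cap]].
exists (fun z => exists b j, N j /\ z = row_mx (row_mx 0 b) j); split.
- split.
  + by exists 0, 0; rewrite !row_mx0.
  + move=> _ _ [b [j [Nj ->]]] [b' [j' [Nj' ->]]]; exists (b + b'), (j + j').
    by rewrite !add_row_mx addr0; split => //; apply: ND.
  + move=> a _ [b [j [Nj ->]]]; exists (a *: b), (a *: j).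
    by rewrite !scale_row_mx scaler0; split => //; apply: NZ.
- move=> z; rewrite -[z]hsubmxK -[lsubmx z]hsubmxK.
  set a := lsubmx (lsubmx z); set b := rsubmx (lsubmx z); set j := rsubmx z.
  have [_ [y [[q ->] Ny jaB]]] := N_span (j - a *m B).
  pose b' := b - (a *m A + q *m (Y *m E)).
  exists (row_mx a q *m X), (row_mx (row_mx 0 b') y); split.
  + by exists (row_mx a q).
  + by exists b', y.
  + rewrite XE !add_row_mx addr0 /b' addrCA subrr addr0.
    by rewrite -addrA -jaB addrCA subrr addr0.
- move=> _ [v ->] [b [j [Nj]]]; rewrite -[v]hsubmxK XE.
  move=> /eq_row_mx [/eq_row_mx [-> _]]; rewrite mul0mx add0r => qYj.
  have qY0 : rsubmx v *m Y = 0 by apply: N_cap; [exists (rsubmx v) | rewrite qYj].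
  by rewrite mulmxA qY0 !mul0mx !addr0 !row_mx0.
Qed.

Lemma prim_rep_hyp_block_orth n m k (J : 'M[R]_m) (K : 'M_k) (w : 'rV_m)
    (l T : 'M_n) (c : 'rV_n) :
    gram_sym J -> prim_rep J K -> T + T^T + qform J w *: (c^T *m c) = l ->
  prim_rep (orth (hyp_block n) J) (orth l K).
Proof.
move=> J_sym [Y [/representationP YJ Y_ds]] lE.
pose E := - (J *m w^T *m c).
exists (block_mx (row_mx 1%:M T) (c^T *m w) (row_mx 0 (Y *m E)) Y); split.
  apply/representationP; rewrite /orth /hyp_block.
  rewrite mulmx_block !mul_row_block !mulmx0 !mul0mx !mulmx1 ?mul1mx !addr0 ?add0r.
  rewrite tr_block_mx !tr_row_mx !trmx_mul !trmxK trmx1 trmx0.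
  rewrite mulmx_block !mul_row_col !mulmx0 !mul0mx !mulmx1 !mul1mx !addr0 !add0r.
  rewrite YJ; congr block_mx.
  - rewrite -lE; congr (_ + _); rewrite !mulmxA -!(mulmxA c^T) qform_mx.
    by rewrite mul_scalar_mx scalemxAr.
  - by rewrite /E raddfN /= mulNmx !trmx_mul !trmxK J_sym !mulmxA addNr.
  - by rewrite /E mulmxN !mulmxA addNr.
exact: direct_summand_image_block.
Qed.

Lemma sym_mx_decomp n (l : 'M[R]_n) (u : R) :
    squares_onto_mod2 R -> u \is a GRing.unit -> gram_sym l ->
  exists (T : 'M_n) (c : 'rV_n), T + T^T + u *: (c^T *m c) = l.
Proof.
move=> sq2 u_unit l_sym.
have /fin_all_exists [f fE] :
    forall i, exists za : R * R, l i i / u - za.1 ^+ 2 = 2%:R * za.2.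
  by move=> i; have [z [a za]] := sq2 (l i i / u); exists (z, a).
pose c := \row_i (f i).1.
exists (\matrix_(i, j) if (i < j)%N then l i j - u * (c 0 i * c 0 j)
                      else if i == j then u * (f i).2 else 0), c.
apply/matrixP => i j; rewrite !mxE big_ord1 !mxE.
have lji : l j i = l i j by rewrite -[in LHS]l_sym mxE.
case: ltngtP => [ij|ji|/val_inj <-].
- by rewrite -val_eqE /= (gtn_eqF ij) addr0 subrK.
- by rewrite -val_eqE /= (gtn_eqF ji) add0r lji [(f j).1 * _]mulrC subrK.
- rewrite eqxx -[l i i](divrK u_unit) -[l i i / u](subrK ((f i).1 ^+ 2)) fE.
  ring.
Qed.

Lemma prim_rep_hyp_orth n m k (J : 'M[R]_m) (K : 'M_k) (w : 'rV_m) (l : 'M_n) :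
    squares_onto_mod2 R -> gram_sym J -> prim_rep J K ->
    qform J w \is a GRing.unit -> gram_sym l ->
  prim_rep (orth (hyp_n R n) J) (orth l K).
Proof.
move=> sq2 J_sym JK u_unit l_sym; apply: prim_rep_hyp_n_of_block.
have [T [c lE]] := sym_mx_decomp sq2 u_unit l_sym.
exact: prim_rep_hyp_block_orth J_sym JK lE.
Qed.

Lemma prim_universal_hyp_orth n m (J : 'M[R]_m) (w : 'rV_m) :
    squares_onto_mod2 R -> gram_sym J -> qform J w \is a GRing.unit ->
  prim_universal n (orth (hyp_n R n) J).
Proof.
move=> sq2 J_sym u_unit l l_sym _; apply: prim_rep_orth0.
exact: prim_rep_hyp_orth sq2 J_sym (prim_rep0 J) u_unit l_sym.
Qed.

End Hyperbolic.

Section RankThree.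
Variable R : comUnitRingType.

Definition mx3 (a b c d e f g h k : R) : 'M[R]_3 :=
  \matrix_(i, j) nth 0 (nth [::] [:: [:: a; b; c]; [:: d; e; f]; [:: g; h; k]] i) j.

Ltac mx3_entries := apply/matrixP => -[[|[|[|i]]] Hi] // -[[|[|[|j]]] Hj] //.

Lemma mx3_mul (a b c d e f g h k a' b' c' d' e' f' g' h' k' : R) :
  mx3 a b c d e f g h k *m mx3 a' b' c' d' e' f' g' h' k' =
  mx3 (a * a' + b * d' + c * g') (a * b' + b * e' + c * h') (a * c' + b * f' + c * k')
      (d * a' + e * d' + f * g') (d * b' + e * e' + f * h') (d * c' + e * f' + f * k')
      (g * a' + h * d' + k * g') (g * b' + h * e' + k * h') (g * c' + h * f' + k * k').
Proof.
by mx3_entries; rewrite !mxE !big_ord_recr big_ord0 /= !mxE /= add0r.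
Qed.

Lemma tr_mx3 (a b c d e f g h k : R) :
  (mx3 a b c d e f g h k)^T = mx3 a d g b e h c f k.
Proof. by mx3_entries; rewrite !mxE. Qed.

Lemma mx3_1 : 1%:M = mx3 1 0 0 0 1 0 0 0 1.
Proof. by mx3_entries; rewrite !mxE. Qed.

Lemma hyp_orth_mx3 (eps : R) :
  orth (hyp R) (diag_lat [:: eps]) = mx3 0 1 0 1 0 0 0 0 eps.
Proof.
apply/matrixP => i j; rewrite /orth.
case: (split_ordP i) => a ->; case: (split_ordP j) => b ->.
all: rewrite ?block_mxEul ?block_mxEur ?block_mxEdl ?block_mxEdr !mxE /=.
all: by case: a => -[|[|[|a]]] Ha //; case: b => -[|[|[|b]]] Hb.
Qed.

Lemma diag_lat3_mx3 (a b c : R) : diag_lat [:: a; b; c] = mx3 a 0 0 0 b 0 0 0 c.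
Proof. by mx3_entries; rewrite !mxE. Qed.

Lemma isometric_hyp_orth_diag (eps : R) :
    squares_onto_mod2 R -> eps \is a GRing.unit ->
  isometric (orth (hyp R) (diag_lat [:: eps])) (diag_lat [:: 1; -1; eps]).
Proof.
move=> sq2 eps_unit; have [z [a za]] := sq2 eps^-1.
pose c := eps * a.
have cE : 2%:R * c = 1 - z ^+ 2 * eps.
  by rewrite /c mulrCA -za mulrBr mulrV // mulrC.
(* The rows of Q are a hyperbolic pair (1, 1, 0), (c, c - 1, z) of <1, -1, eps>
   (this is where 2c = 1 - z^2 eps is needed) and a vector of norm eps orthogonal
   to both; P is the inverse of Q. *)
pose Q := mx3 1 1 0 c (c - 1) z (- (z * eps)) (- (z * eps)) 1.
pose P := mx3 (- (c - 1 + z ^+ 2 * eps)) 1 (- z) (c + z ^+ 2 * eps) (-1) z (z * eps) 0 1.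
have PQ : P *m Q = 1%:M by rewrite mx3_mul mx3_1; congr mx3; ring.
have QG : Q *m diag_lat [:: 1; -1; eps] *m Q^T = orth (hyp R) (diag_lat [:: eps]).
  rewrite hyp_orth_mx3 diag_lat3_mx3 tr_mx3 !mx3_mul; congr mx3; try ring.
  by transitivity (2%:R * c - (1 - z ^+ 2 * eps)); [ring | rewrite cE subrr].
exists P; split; first by case: (mulmx1_unit PQ).
by rewrite -QG !mulmxA PQ mul1mx -mulmxA -trmx_mul PQ trmx1 mulmx1.
Qed.

End RankThree.

Theorem lemma5p2 (R : idomainType)
    (hR : ring_of_integers_of_local_field R)
    (hchar : 2%N \notin [pchar R])
    (h2 : prime_element (2%:R : R)) :
  (forall eps : R, eps \is a GRing.unit ->
     [/\ isometric (orth (hyp R) (diag_lat [:: eps]))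
                   (diag_lat [:: 1; -1; eps]),
         (forall alpha : R,
            prim_rep (orth (hyp R) (diag_lat [:: eps])) (diag_lat [:: alpha; eps]))
       & prim_universal 1 (orth (hyp R) (diag_lat [:: eps]))])
  /\
  (forall (m k : nat) (J : 'M[R]_m) (K : 'M[R]_k),
     gram_sym J -> gram_sym K ->
     prim_rep J K ->
     (exists u : R, u \is a GRing.unit /\ prim_rep_elt J u) ->
     forall n : nat, (1 <= n)%N ->
       (forall l : 'M[R]_n, gram_sym l ->
          prim_rep (orth (hyp_n R n) J) (orth l K))
       /\ prim_universal n (orth (hyp_n R n) J)).
Proof.
have sq2 := local_squares_onto_mod2 hR h2.
split=> [eps eps_unit | m k J K J_sym _ JK [u [u_unit [w [Jwu _]]]] n _].
- have eps_sym := diag_lat_sym [:: eps].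
  have qeps_unit : qform (diag_lat [:: eps]) 1%:M \is a GRing.unit.
    by rewrite qform_diag_lat1.
  split.
  + exact: isometric_hyp_orth_diag.
  + move=> alpha; rewrite (diag_lat_cons alpha).
    have alpha_sym := diag_lat_sym [:: alpha].
    exact: prim_rep_hyp_orth sq2 eps_sym (prim_rep_refl _) qeps_unit alpha_sym.
  + exact: prim_universal_hyp_orth sq2 eps_sym qeps_unit.
- rewrite -Jwu in u_unit; split.
  + by move=> l l_sym; apply: prim_rep_hyp_orth sq2 J_sym JK u_unit l_sym.
  + exact: prim_universal_hyp_orth sq2 J_sym u_unit.
Qed.
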